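(* Let $n,m\ge1$ and $1\le t\le m$ be integers, and let $\pi$ be a uniformly random permutation of $[nm]$. For $i\in[n]$ let $U^i_\pi=\{\pi(1),\dots,\pi(t)\}\cap\{m(i-1)+1,\dots,mi\}$ and $C_\pi=\max_{i\in[n]}|U^i_\pi|$. Then for every integer $j$ with $1\le j<t$, $$\Pr_\pi[C_\pi=j]\le\frac{n\binom{m}{t}}{\binom{nm}{t}}\,(nm)^{3(t-j)}.$$ *)

(* Elements of [nm] are represented 0-indexed by 'I_(n*m). *)
From HB Require Import structures.
From mathcomp Require Import all_boot all_order all_algebra all_fingroup.
Set Implicit Arguments. Unset Strict Implicit. Unset Printing Implicit Defensive.

Definition Ublock (n m t : nat) (pi : {perm 'I_(n * m)}) (i : nat) : {set 'I_(n * m)} :=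
  [set x | [exists k : 'I_(n * m), (k < t) && (pi k == x)] &&
           (m * i <= x) && (x < m * i + m)].

Arguments Ublock : clear implicits.

Definition Cmax (n m t : nat) (pi : {perm 'I_(n * m)}) : nat :=
  (\max_(i < n) #|Ublock n m t pi i|)%N.

Arguments Cmax : clear implicits.

Definition prob_C_eq (n m t j : nat) : rat :=
  (#|[set pi : {perm 'I_(n * m)} | Cmax n m t pi == j]|%:R /
   #|[set: {perm 'I_(n * m)}]|%:R)%R.
Arguments prob_C_eq : clear implicits.

(** The first [t] values of a uniform random permutation form a uniform
    random [t]-subset [S] of [[nm]], since all fibres of [pi |-> pi @: [1..t]]
    are cosets of one stabiliser.  If [C_pi = j], some block meets [S] in
    exactly [j] points, so by the union bound
    [Pr[C = j] <= n C(m, j) C(nm, t - j) / C(nm, t)].  Raising [j] to [t] one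
    step at a time costs a factor [m] per step, giving
    [C(m, j) <= C(m, t) m^(t - j)], and [C(nm, t - j) <= (nm)^(t - j)]. *)
From HB Require Import structures.
From mathcomp Require Import all_boot all_order all_algebra all_fingroup.
Import GRing.Theory Num.Theory.
Set Implicit Arguments. Unset Strict Implicit. Unset Printing Implicit Defensive.

Section PermImage.
Variable X : finType.
Implicit Types (A B S T : {set X}) (p q : {perm X}).

Lemma imset_permM p q A : (p * q)%g @: A = q @: (p @: A).
Proof. by rewrite -imset_comp; apply: eq_imset => x; rewrite permM. Qed.

Lemma perm_imset_transitive A B : #|A| = #|B| -> exists p, p @: A = B.
Proof.
move: {2}#|A :\: B| (leqnn #|A :\: B|) => k.
elim: k A => [|k IH] A leAk eqAB;
  have [sAB | /subsetPn [x Ax nBx]] := boolP (A \subset B).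
1,3: by exists 1%g; rewrite imset_perm1; apply/eqP; rewrite eqEcard sAB eqAB leqnn.
  by move: leAk; rewrite (cardsD1 x) inE Ax nBx.
have /set0Pn [y] : B :\: A != set0.
  by rewrite -card_gt0 cardsD setIC -eqAB -cardsD (cardsD1 x) inE Ax nBx.
rewrite inE => /andP [nAy By].
pose A' := tperm x y @: A.
have leA'k : #|A' :\: B| <= k.
  have sA' : A' :\: B \subset (A :\: B) :\ x.
    apply/subsetP => _ /setDP [/imsetP [w Aw ->]].
    case: tpermP => [_ | wy | nwx _] nBz; first by rewrite By in nBz.
      by rewrite -wy Aw in nAy.
    by rewrite !inE nBz Aw !andbT; apply/eqP.
  rewrite -ltnS; apply: leq_ltn_trans (subset_leq_card sA') _.
  by move: leAk; rewrite (cardsD1 x (A :\: B)) inE Ax nBx.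
have [q A'q] := IH A' leA'k (etrans (card_imset _ perm_inj) eqAB).
by exists (tperm x y * q)%g; rewrite imset_permM.
Qed.

Definition perm_fiber T S := [set p : {perm X} | p @: T == S].

Lemma perm_fiberE T p : perm_fiber T (p @: T) = (perm_fiber T T :* p)%g.
Proof.
apply/setP => q; rewrite mem_rcoset !inE.
by rewrite -[RHS](inj_eq (imset_inj (@perm_inj _ p))) -imset_permM mulgVK.
Qed.

Lemma card_perm_fiber T S : #|S| = #|T| -> #|perm_fiber T S| = #|perm_fiber T T|.
Proof.
by case/esym/perm_imset_transitive => p <-; rewrite perm_fiberE card_rcoset.
Qed.

Lemma card_perm_imset_pred T (P : pred {set X}) :
  #|[set p : {perm X} | P (p @: T)]| =
  #|[set S : {set X} | (#|S| == #|T|) && P S]| * #|perm_fiber T T|.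
Proof.
rewrite -sum1_card (partition_big (fun p : {perm X} => p @: T)
  (fun S => (#|S| == #|T|) && P S)) => [|p]; last first.
  by rewrite inE card_imset ?eqxx //; apply: perm_inj.
rewrite -sum_nat_const; apply: eq_big => [S|S /andP [/eqP cardS PS]]; first by rewrite inE.
rewrite -(card_perm_fiber cardS) -sum1_card; apply: eq_bigl => p.
by rewrite !inE andb_idl => [|/eqP ->].
Qed.

Lemma perm_imset_ratio (R : numFieldType) T (P : pred {set X}) :
  (#|[set p : {perm X} | P (p @: T)]|%:R / #|[set: {perm X}]|%:R =
   #|[set S : {set X} | (#|S| == #|T|) && P S]|%:R / 'C(#|X|, #|T|)%:R :> R)%R.
Proof.
have -> : [set: {perm X}] = [set p : {perm X} | predT (p @: T)] by apply/setP => p; rewrite !inE.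
have -> : 'C(#|X|, #|T|) = #|[set S : {set X} | (#|S| == #|T|) && predT S]|.
  by rewrite -card_draws; apply: eq_card => S; rewrite !inE andbT.
have fiber_gt0 : 0 < #|perm_fiber T T|.
  by apply/card_gt0P; exists 1%g; rewrite inE imset_perm1.
rewrite !card_perm_imset_pred !natrM invfM mulrACA mulfV ?mulr1 //.
by rewrite pnatr_eq0 -lt0n.
Qed.

End PermImage.

Lemma card_exists_leq_sum (I T : finType) (P : I -> pred T) :
  #|[set x | [exists i, P i x]]| <= \sum_i #|[set x | P i x]|.
Proof.
apply: (@leq_trans (\sum_x \sum_i P i x)).
  rewrite -sum1_card big_mkcond /=; apply: leq_sum => x _.
  by rewrite inE; case: existsP => // [[i Pix]]; rewrite (bigD1 i) //= Pix.
rewrite exchange_big; apply: leq_sum => i _.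
by rewrite -sum1_card [X in _ <= X]big_mkcond; apply: leq_sum => x _; rewrite inE; case: (P i x).
Qed.

Section Draws.
Variable T : finType.

Lemma card_draws_meet (B : {set T}) t j :
  #|[set S : {set T} | (#|S| == t) && (#|S :&: B| == j)]| <= 'C(#|B|, j) * 'C(#|T|, t - j).
Proof.
pose split_at (S : {set T}) := (S :&: B, S :\: B).
have split_inj : injective split_at.
  by move=> S1 S2 [eqI eqD]; rewrite -(setID S1 B) -(setID S2 B) eqI eqD.
rewrite -(card_imset _ split_inj) -cards_draws -card_draws -cardsX subset_leq_card //.
apply/subsetP => _ /imsetP [S /[!inE] /andP [/eqP cardS /eqP cardSB] ->].
by rewrite /split_at /= subsetIr cardSB cardsD cardS cardSB !eqxx.
Qed.

Lemma card_draws_max_meet n (B : 'I_n -> {set T}) m t j :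
  0 < n -> (forall i, #|B i| <= m) ->
  #|[set S : {set T} | (#|S| == t) && (\max_(i < n) #|S :&: B i| == j)]|
    <= n * ('C(m, j) * 'C(#|T|, t - j)).
Proof.
move=> n_gt0 cardB.
pose meets i (S : {set T}) := (#|S| == t) && (#|S :&: B i| == j).
apply: leq_trans (_ : #|[set S | [exists i, meets i S]]| <= _).
  apply/subset_leq_card/subsetP => S /[!inE] /andP [cardS /eqP maxS].
  have := eq_bigmax (fun i : 'I_n => #|S :&: B i|); rewrite card_ord => /(_ n_gt0) [i maxSi].
  by apply/existsP; exists i; rewrite /meets cardS -maxS maxSi eqxx.
apply: leq_trans (card_exists_leq_sum meets) _.
rewrite -[n in n * _]card_ord -sum_nat_const leq_sum // => i _.
by apply: leq_trans (card_draws_meet (B i) t j) _; rewrite leq_mul2r leq_bin2l ?orbT.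
Qed.

End Draws.

Lemma leq_bin_mulS m k : k < m -> 'C(m, k) <= 'C(m, k.+1) * m.
Proof.
move=> lt_km; apply: (@leq_trans ((m - k) * 'C(m, k))).
  by rewrite leq_pmull // subn_gt0.
by rewrite -mul_bin_left mulnC leq_mul2l lt_km orbT.
Qed.

Lemma leq_bin_mulX m j t : j <= t -> t <= m -> 'C(m, j) <= 'C(m, t) * m ^ (t - j).
Proof.
elim: t => [|t IH] le_jt le_tm; first by move: le_jt; rewrite leqn0 => /eqP ->; rewrite subnn muln1.
have [-> | lt_jt] := eqVneq j t.+1; first by rewrite subnn muln1.
have le_jt' : j <= t by rewrite -ltnS ltn_neqAle lt_jt.
rewrite subSn // expnS mulnA; apply: leq_trans (IH le_jt' (ltnW le_tm)) _.
by rewrite leq_mul2r leq_bin_mulS ?orbT.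
Qed.

Lemma bin_leq_expn N k : 'C(N, k) <= N ^ k.
Proof.
rewrite -(leq_pmul2r (fact_gt0 k)) bin_ffact (leq_trans _ (leq_pmulr _ (fact_gt0 k))) //.
rewrite ffact_prod -[k in N ^ k]card_ord -prod_nat_const.
by apply: leq_prod => i _; apply: leq_subr.
Qed.

Lemma leq_bin_mul_bin m N j t : j < t -> t <= m -> m <= N ->
  'C(m, j) * 'C(N, t - j) <= 'C(m, t) * N ^ (2 * (t - j)).
Proof.
move=> lt_jt le_tm le_mN; rewrite mul2n -addnn expnD mulnA leq_mul ?bin_leq_expn //.
rewrite (leq_trans (leq_bin_mulX (ltnW lt_jt) le_tm)) // leq_mul2l.
by rewrite leq_exp2r ?le_mN ?orbT // subn_gt0.
Qed.

Definition ord_seg N a m : {set 'I_N} := [set x : 'I_N | a <= x < a + m].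

Lemma card_ord_seg N a m : a + m <= N -> #|ord_seg N a m| = m.
Proof.
move=> le_amN; rewrite cardE -(size_map val) -[m in RHS](size_iota a).
apply/eqP; rewrite -uniq_size_uniq ?iota_uniq ?(map_inj_uniq val_inj) ?enum_uniq //.
move=> x; rewrite mem_iota; apply/idP/mapP => [x_seg | [y]]; last first.
  by rewrite mem_enum inE => y_seg ->.
have lt_xN : x < N by apply: leq_trans le_amN; case/andP: x_seg.
by exists (Ordinal lt_xN); rewrite ?mem_enum ?inE.
Qed.

Lemma UblockE n m t (pi : {perm 'I_(n * m)}) i :
  Ublock n m t pi i = pi @: ord_seg (n * m) 0 t :&: ord_seg (n * m) (m * i) m.
Proof.
apply/setP => x; rewrite !inE -andbA; congr andb.
apply/existsP/imsetP => [[k /andP [lt_kt /eqP <-]] | [k]]; first by exists k; rewrite ?inE.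
by rewrite inE add0n => /andP [_ lt_kt] ->; exists k; rewrite lt_kt eqxx.
Qed.

Local Open Scope ring_scope.

Theorem mainTheorem16 (n m t j : nat) (hn : (1 <= n)%N) (hm : (1 <= m)%N)
  (ht1 : (1 <= t)%N) (htm : (t <= m)%N) (hj1 : (1 <= j)%N) (hjt : (j < t)%N) :
  prob_C_eq n m t j <=
  (n * 'C(m, t))%:R / ('C(n * m, t))%:R * ((n * m) ^ (3 * (t - j)))%:R :> rat.
Proof.
set N := (n * m)%N.
pose B (i : 'I_n) := ord_seg N (m * i) m.
have cardB i : #|B i| = m.
  by rewrite card_ord_seg // -mulnSr mulnC leq_mul2r ltn_ord orbT.
have cardT : #|ord_seg N 0 t| = t by rewrite card_ord_seg // (leq_trans htm) ?leq_pmull.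
rewrite /prob_C_eq.
have -> : [set pi | Cmax n m t pi == j] =
    [set pi : {perm 'I_N} | \max_(i < n) #|pi @: ord_seg N 0 t :&: B i| == j].
  by apply/setP => pi; rewrite !inE /Cmax; under eq_bigr do rewrite UblockE.
rewrite (perm_imset_ratio _ _ (fun S => \max_(i < n) #|S :&: B i| == j)).
rewrite card_ord cardT mulrAC -natrM ler_wpM2r ?invr_ge0 ?ler0n // ler_nat.
apply: leq_trans (card_draws_max_meet t j hn (fun i => eq_leq (cardB i))) _.
rewrite card_ord -mulnA leq_mul // (leq_trans (leq_bin_mul_bin hjt htm (leq_pmull _ hn))) //.
by rewrite leq_mul // leq_pexp2l ?muln_gt0 ?hn // leq_mul.
Qed.
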